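(* Let $h$ be the Hahn sequence space and let $\Delta:h\to h$ be the forward difference operator $(\Delta x)_k=x_k-x_{k+1}$. Then the continuous spectrum of $\Delta$ on $h$ is $$\sigma_c(\Delta,h)=\{\alpha\in\mathbb{C}:|1-\alpha|=1\}.$$
   Context: Sequences are indexed by $\mathbb{N}=\{0,1,2,\dots\}$. The Hahn sequence space is $h=\{x=(x_k):\sum_{k=1}^\infty k|x_k-x_{k+1}|<\infty \text{ and } \lim_{k\to\infty}x_k=0\}$, a Banach space with norm $\|x\|_h=\sum_k k|x_k-x_{k+1}|+\sup_k|x_k|$. $\Delta$ is given by the matrix with $1$ on the main diagonal and $-1$ on the first superdiagonal. For a bounded operator $T$ on a Banach space $X$, the continuous spectrum $\sigma_c(T,X)$ is the set of $\alpha\in\mathbb{C}$ such that $\alpha I-T$ is injective, its range is dense in $X$, and its inverse (defined on the range) is unbounded. *)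

From Stdlib Require Import Reals.
From Coquelicot Require Import Coquelicot.

Open Scope R_scope.

Definition seqC := nat -> C.

(** The term k |x_k - x_{k+1}| (the k = 0 term is 0, so summing over all
    k : nat is the same as summing from k = 1). *)
Definition hahn_var (x : seqC) (k : nat) : R :=
  INR k * Cmod (Cminus (x k) (x (S k))).

Definition in_hahn (x : seqC) : Prop :=
  ex_series (hahn_var x) /\ filterlim x eventually (locally (RtoC 0)).

Definition hahn_norm (x : seqC) : R :=
  Series (hahn_var x) + real (Sup_seq (fun k => Finite (Cmod (x k)))).

Definition fwd_diff (x : seqC) : seqC := fun k => Cminus (x k) (x (S k)).

Definition shift_op (alpha : C) (T : seqC -> seqC) (x : seqC) : seqC :=
  fun k => Cminus (Cmult alpha (x k)) (T x k).

(** Continuous spectrum of an operator T on the normed sequence space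
    X (membership predicate) with norm N: alpha I - T is injective on X,
    its range is dense in X, and its inverse (on the range) is unbounded. *)
Definition cont_spectrum (X : seqC -> Prop) (N : seqC -> R)
    (T : seqC -> seqC) (alpha : C) : Prop :=
  let S := shift_op alpha T in
  (forall x y, X x -> X y -> S x = S y -> x = y) /\
  (forall y, X y -> forall eps, 0 < eps ->
     exists x, X x /\ N (fun k => Cminus (S x k) (y k)) < eps) /\
  ~ (exists M : R, forall x, X x -> N x <= M * N (S x)).

From Stdlib Require Import Reals Lra Lia FunctionalExtensionality.
From Coquelicot Require Import Coquelicot.
Open Scope R_scope.

(* Write b = 1 - alpha, so that (alpha I - Delta) x = (x_{k+1} - b x_k)_k.
   If |b| < 1 the geometric sequence (b^k) lies in h and is killed by this
   operator.  If |b| >= 1 a kernel element would satisfy |z_k| >= |z_0| and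
   tend to 0, so the operator is injective; for |b| > 1 the identities
   b x_k = x_{k+1} - y_k and b (Delta x)_k = (Delta x)_{k+1} - (Delta y)_k
   give (|b| - 1) ||x|| <= ||y||.  Finitely supported sequences have finitely
   supported preimages and are dense in h, so the range is dense.  Finally,
   for |b| = 1 the preimage x of the indicator of {0..m} has |x_k - x_{k+1}| = 1
   for k <= m, hence ||x|| >= m(m+1)/2 while the indicator has norm m + 1. *)

(* [Series] and [real] send divergence to [0], so nonnegativity needs no summability. *)
Lemma Series_ge0 (a : nat -> R) : (forall k, 0 <= a k) -> 0 <= Series a.
Proof.
  intros Ha.
  assert (H : Rbar_le 0 (Lim_seq (sum_n a))).
  { rewrite <- (Lim_seq_const 0). apply Lim_seq_le_loc. exists 0%nat. intros n _.
    rewrite sum_n_Reals. now apply cond_pos_sum. }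
  unfold Series. destruct (Lim_seq (sum_n a)); simpl in *; lra.
Qed.

Lemma sum_f_R0_le_Series (a : nat -> R) (m : nat) :
  ex_series a -> (forall k, 0 <= a k) -> sum_f_R0 a m <= Series a.
Proof.
  intros Hex Ha. rewrite (Series_incr_n a (S m)) by (lia || exact Hex). simpl.
  pose proof (Series_ge0 (fun k => a (S (m + k))) (fun k => Ha _)). lra.
Qed.

Lemma Series_eventually_0 (a : nat -> R) (n : nat) :
  (forall k, (n <= k)%nat -> a k = 0) -> ex_series a /\ Series a = sum_f_R0 a n.
Proof.
  intros Ha.
  assert (Hsum : forall d, sum_n a (n + d) = sum_f_R0 a n).
  { induction d as [|d IH].
    - rewrite Nat.add_0_r. apply sum_n_Reals.
    - rewrite Nat.add_succ_r, sum_Sn, IH, Ha by lia. apply Rplus_0_r. }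
  assert (H : is_series a (sum_f_R0 a n)).
  { apply (filterlim_ext_loc (fun _ => sum_f_R0 a n)); [|apply filterlim_const].
    exists n. intros N HN. replace N with (n + (N - n))%nat by lia. now rewrite Hsum. }
  split; [now exists (sum_f_R0 a n)|]. now apply is_series_unique.
Qed.

Definition sup_norm (x : seqC) : R := real (Sup_seq (fun k => Finite (Cmod (x k)))).

Lemma hahn_norm_split (x : seqC) : hahn_norm x = Series (hahn_var x) + sup_norm x.
Proof. reflexivity. Qed.

Lemma sup_norm_ge0 (x : seqC) : 0 <= sup_norm x.
Proof.
  assert (H : Rbar_le 0 (Sup_seq (fun k => Finite (Cmod (x k))))).
  { apply (Sup_seq_minor_le _ 0 0). apply Cmod_ge_0. }
  unfold sup_norm. destruct (Sup_seq _); simpl in *; lra.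
Qed.

Section BoundedSeq.
Variables (x : seqC) (B : R).
Hypothesis HB : forall k, Cmod (x k) <= B.

Lemma Sup_seq_Cmod_finite :
  Sup_seq (fun k => Finite (Cmod (x k))) = Finite (sup_norm x) /\ sup_norm x <= B.
Proof.
  assert (Hle : Rbar_le (Sup_seq (fun k => Finite (Cmod (x k)))) B).
  { apply Rbar_not_lt_le. intros [k Hk]%Sup_seq_minor_lt. specialize (HB k). simpl in Hk. lra. }
  assert (Hge : Rbar_le 0 (Sup_seq (fun k => Finite (Cmod (x k))))).
  { apply (Sup_seq_minor_le _ 0 0). apply Cmod_ge_0. }
  unfold sup_norm. destruct (Sup_seq _); simpl in *; now try contradiction.
Qed.

Lemma sup_norm_le : sup_norm x <= B.
Proof. apply Sup_seq_Cmod_finite. Qed.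

Lemma Cmod_le_sup_norm k : Cmod (x k) <= sup_norm x.
Proof.
  assert (H : Rbar_le (Cmod (x k)) (Sup_seq (fun k => Finite (Cmod (x k))))).
  { apply (Sup_seq_minor_le _ _ k). apply Rle_refl. }
  now rewrite (proj1 Sup_seq_Cmod_finite) in H.
Qed.

End BoundedSeq.

Lemma hahn_var_ge0 (x : seqC) (k : nat) : 0 <= hahn_var x k.
Proof. apply Rmult_le_pos; [apply pos_INR | apply Cmod_ge_0]. Qed.

Lemma hahn_var_eq_0 (x : seqC) (k : nat) : x k = x (S k) -> hahn_var x k = 0.
Proof.
  intros H. unfold hahn_var. rewrite H.
  replace (Cminus (x (S k)) (x (S k))) with (RtoC 0) by ring. rewrite Cmod_0. ring.
Qed.

Lemma hahn_norm_ge0 (x : seqC) : 0 <= hahn_norm x.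
Proof.
  rewrite hahn_norm_split.
  pose proof (Series_ge0 _ (hahn_var_ge0 x)). pose proof (sup_norm_ge0 x). lra.
Qed.

Lemma tends_to_0_Cmod (x : seqC) :
  filterlim x eventually (locally (RtoC 0)) <->
  forall eps, 0 < eps -> exists N, forall n, (N <= n)%nat -> Cmod (x n) < eps.
Proof.
  assert (Hx0 : forall n, minus (x n) (RtoC 0) = x n).
  { intros n. apply injective_projections; simpl; ring. }
  split.
  - intros Hlim eps Heps.
    set (c := @norm_factor C_AbsRing C_NormedModule).
    assert (Hc : 0 < c) by apply norm_factor_gt_0.
    assert (Hec : 0 < eps / c) by (apply Rdiv_lt_0_compat; lra).
    destruct (proj1 (filterlim_locally x (RtoC 0)) Hlim (mkposreal _ Hec)) as [N HN].
    exists N. intros n Hn. specialize (HN n Hn).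
    apply (@norm_compat2 C_AbsRing C_NormedModule) in HN. simpl in HN.
    change (Cmod (minus (x n) (RtoC 0)) < c * (eps / c)) in HN.
    rewrite Hx0 in HN. replace eps with (c * (eps / c)) by (field; lra). exact HN.
  - intros H. apply filterlim_locally. intros eps.
    destruct (H eps (cond_pos eps)) as [N HN]. exists N. intros n Hn.
    apply (@norm_compat1 C_AbsRing C_NormedModule).
    change (Cmod (minus (x n) (RtoC 0)) < eps). rewrite Hx0. auto.
Qed.

Lemma hahn_bounded (x : seqC) : in_hahn x -> exists B, forall k, Cmod (x k) <= B.
Proof.
  intros [_ Hlim]. destruct (@filterlim_bounded C_AbsRing C_NormedModule x) as [B HB].
  - now exists (RtoC 0).
  - exists B. exact HB.
Qed.

Lemma sum_hahn_var_le_hahn_norm (x : seqC) (m : nat) :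
  in_hahn x -> sum_f_R0 (hahn_var x) m <= hahn_norm x.
Proof.
  intros [Hex _]. rewrite hahn_norm_split.
  pose proof (sum_f_R0_le_Series _ m Hex (hahn_var_ge0 x)). pose proof (sup_norm_ge0 x). lra.
Qed.

Definition vanishes_from (x : seqC) (n : nat) : Prop := forall k, (n <= k)%nat -> x k = RtoC 0.

Lemma vanishes_from_in_hahn (x : seqC) (n : nat) : vanishes_from x n -> in_hahn x.
Proof.
  intros Hx. split.
  - apply (Series_eventually_0 _ n). intros k Hk.
    apply hahn_var_eq_0. rewrite !Hx by lia. reflexivity.
  - apply tends_to_0_Cmod. intros eps Heps. exists n. intros k Hk. rewrite Hx, Cmod_0; auto.
Qed.

Definition shift_sub (b : C) (x : seqC) : seqC := fun k => Cminus (x (S k)) (Cmult b (x k)).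

Lemma shift_op_fwd_diff (alpha : C) :
  shift_op alpha fwd_diff = shift_sub (Cminus (RtoC 1) alpha).
Proof.
  apply functional_extensionality. intros x. apply functional_extensionality. intros k.
  unfold shift_op, fwd_diff, shift_sub. ring.
Qed.

Lemma shift_sub_kernel_trivial (b : C) (z : seqC) :
  1 <= Cmod b -> filterlim z eventually (locally (RtoC 0)) ->
  (forall k, shift_sub b z k = RtoC 0) -> forall k, z k = RtoC 0.
Proof.
  intros Hb Hz Hker.
  assert (Hrec : forall k, z (S k) = Cmult b (z k)).
  { intros k. specialize (Hker k). unfold shift_sub in Hker.
    transitivity (Cplus (Cminus (z (S k)) (Cmult b (z k))) (Cmult b (z k))); [ring|].
    rewrite Hker. ring. }
  assert (Hgrow : forall k, Cmod (z 0%nat) <= Cmod (z k)).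
  { induction k as [|k IH]; [lra|]. rewrite Hrec, Cmod_mult.
    pose proof (Cmod_ge_0 (z k)). nra. }
  assert (Hz0 : z 0%nat = RtoC 0).
  { apply Cmod_eq_0. destruct (Cmod_ge_0 (z 0%nat)) as [Hpos|]; [exfalso|auto].
    destruct (proj1 (tends_to_0_Cmod z) Hz _ Hpos) as [N HN].
    specialize (HN N (le_n N)). specialize (Hgrow N). lra. }
  induction k as [|k IH]; [exact Hz0|]. rewrite Hrec, IH. ring.
Qed.

Lemma shift_sub_injective (b : C) : 1 <= Cmod b ->
  forall x y, in_hahn x -> in_hahn y -> shift_sub b x = shift_sub b y -> x = y.
Proof.
  intros Hb x y [_ Hx] [_ Hy] Exy.
  set (z := fun k => Cminus (x k) (y k)).
  assert (Hz : filterlim z eventually (locally (RtoC 0))).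
  { apply tends_to_0_Cmod. intros eps Heps.
    destruct (proj1 (tends_to_0_Cmod x) Hx (eps / 2)) as [N1 H1]; [lra|].
    destruct (proj1 (tends_to_0_Cmod y) Hy (eps / 2)) as [N2 H2]; [lra|].
    exists (N1 + N2)%nat. intros n Hn. unfold z, Cminus.
    pose proof (Cmod_triangle (x n) (Copp (y n))). rewrite Cmod_opp in H.
    specialize (H1 n ltac:(lia)). specialize (H2 n ltac:(lia)). lra. }
  assert (Hker : forall k, shift_sub b z k = RtoC 0).
  { intros k. pose proof (f_equal (fun f => f k) Exy) as Ek. simpl in Ek.
    unfold shift_sub, z in *.
    transitivity (Cminus (Cminus (x (S k)) (Cmult b (x k))) (Cminus (y (S k)) (Cmult b (y k))));
      [ring|]. rewrite Ek. ring. }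
  apply functional_extensionality. intros k.
  pose proof (shift_sub_kernel_trivial b z Hb Hz Hker k) as Hk. unfold z in Hk.
  transitivity (Cplus (Cminus (x k) (y k)) (y k)); [ring|]. rewrite Hk. ring.
Qed.

Lemma ex_series_INR_pow (q : R) : 0 <= q < 1 -> ex_series (fun n => INR n * q ^ n).
Proof.
  intros Hq.
  assert (Hgeom : is_series (fun n => q ^ n) (Series (fun n => q ^ n))).
  { apply Series_correct, ex_series_geom. rewrite Rabs_pos_eq; lra. }
  (* The Cauchy square of the geometric series has terms (n + 1) q^n. *)
  assert (Hsq : ex_series (fun n => (INR n + 1) * q ^ n)).
  { eexists. apply (is_series_ext (fun n => sum_f_R0 (fun k => q ^ k * q ^ (n - k)) n)).
    - intros n. rewrite (sum_eq _ (fun _ => q ^ n)).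
      + rewrite sum_cte, S_INR. apply Rmult_comm.
      + intros k Hk. rewrite <- pow_add. f_equal. lia.
    - apply (is_series_mult_pos _ _ _ _ Hgeom Hgeom); intros; apply pow_le; lra. }
  apply (@ex_series_le R_AbsRing R_CompleteNormedModule _ (fun n => (INR n + 1) * q ^ n));
    [|exact Hsq].
  intros n. change (Rabs (INR n * q ^ n) <= (INR n + 1) * q ^ n).
  pose proof (pos_INR n). pose proof (pow_le q n (proj1 Hq)).
  rewrite Rabs_pos_eq; nra.
Qed.

Lemma geometric_in_hahn (b : C) : Cmod b < 1 -> in_hahn (fun k => (b ^ k)%C).
Proof.
  intros Hb. pose proof (Cmod_ge_0 b). split.
  - eapply ex_series_ext;
      [|apply (ex_series_scal_r (Cmod (Cminus (RtoC 1) b))), (ex_series_INR_pow (Cmod b)); lra].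
    intros k. unfold hahn_var. simpl.
    replace (Cminus (b ^ k) (b * b ^ k)) with (Cmult (b ^ k) (Cminus (RtoC 1) b)) by ring.
    rewrite Cmod_mult, Cmod_pow. ring.
  - apply tends_to_0_Cmod. intros eps Heps.
    assert (Hlim : is_lim_seq (fun n => Cmod b ^ n) 0)
      by (apply is_lim_seq_geom; rewrite Rabs_pos_eq; lra).
    apply is_lim_seq_spec in Hlim. destruct (Hlim (mkposreal eps Heps)) as [N HN].
    exists N. intros n Hn. specialize (HN n Hn). simpl in HN.
    rewrite Cmod_pow. rewrite Rminus_0_r, Rabs_pos_eq in HN; [exact HN | now apply pow_le].
Qed.

Lemma shift_sub_not_injective (b : C) : Cmod b < 1 ->
  ~ (forall x y, in_hahn x -> in_hahn y -> shift_sub b x = shift_sub b y -> x = y).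
Proof.
  intros Hb Hinj.
  assert (E : (fun k => (b ^ k)%C) = (fun _ => RtoC 0)).
  { apply Hinj.
    - now apply geometric_in_hahn.
    - apply (vanishes_from_in_hahn _ 0). now intros k _.
    - apply functional_extensionality. intros k. unfold shift_sub. simpl. ring. }
  pose proof (f_equal (fun f => fst (f 0%nat)) E) as E0. simpl in E0. lra.
Qed.

Lemma hahn_var_fwd_diff (x : seqC) (k : nat) : hahn_var x k = INR k * Cmod (fwd_diff x k).
Proof. reflexivity. Qed.

Lemma fwd_diff_shift_sub (b : C) (x : seqC) :
  fwd_diff (shift_sub b x) = shift_sub b (fwd_diff x).
Proof.
  apply functional_extensionality. intros k. unfold fwd_diff, shift_sub. ring.
Qed.

Lemma Cmod_shift_sub_le (b : C) (z : seqC) (k : nat) :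
  Cmod (shift_sub b z k) <= Cmod (z (S k)) + Cmod b * Cmod (z k).
Proof.
  unfold shift_sub, Cminus. rewrite <- Cmod_mult, <- (Cmod_opp (Cmult b (z k))).
  apply Cmod_triangle.
Qed.

Lemma Cmod_scal_le_shift_sub (b : C) (z : seqC) (k : nat) :
  Cmod b * Cmod (z k) <= Cmod (z (S k)) + Cmod (shift_sub b z k).
Proof.
  rewrite <- Cmod_mult, <- (Cmod_opp (shift_sub b z k)).
  replace (Cmult b (z k)) with (Cplus (z (S k)) (Copp (shift_sub b z k)))
    by (unfold shift_sub; ring).
  apply Cmod_triangle.
Qed.

Lemma hahn_var_shift_sub_le (b : C) (x : seqC) (k : nat) :
  hahn_var (shift_sub b x) k <= hahn_var x (S k) + Cmod b * hahn_var x k.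
Proof.
  rewrite !hahn_var_fwd_diff, fwd_diff_shift_sub, S_INR.
  pose proof (Cmod_shift_sub_le b (fwd_diff x) k). pose proof (pos_INR k).
  pose proof (Cmod_ge_0 (fwd_diff x (S k))). nra.
Qed.

Lemma scal_hahn_var_le_shift_sub (b : C) (x : seqC) (k : nat) :
  Cmod b * hahn_var x k <= hahn_var x (S k) + hahn_var (shift_sub b x) k.
Proof.
  rewrite !hahn_var_fwd_diff, fwd_diff_shift_sub, S_INR.
  pose proof (Cmod_scal_le_shift_sub b (fwd_diff x) k). pose proof (pos_INR k).
  pose proof (Cmod_ge_0 (fwd_diff x (S k))). nra.
Qed.

Lemma shift_sub_in_hahn (b : C) (x : seqC) : in_hahn x -> in_hahn (shift_sub b x).
Proof.
  intros [Hvar Hlim]. pose proof (Cmod_ge_0 b). split.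
  - apply (@ex_series_le R_AbsRing R_CompleteNormedModule _
             (fun k => hahn_var x (S k) + Cmod b * hahn_var x k)).
    + intros k.
      change (Rabs (hahn_var (shift_sub b x) k) <= hahn_var x (S k) + Cmod b * hahn_var x k).
      rewrite Rabs_pos_eq by apply hahn_var_ge0. apply hahn_var_shift_sub_le.
    + apply (@ex_series_plus R_AbsRing R_NormedModule).
      * now apply ex_series_incr_1 in Hvar.
      * now apply (@ex_series_scal R_AbsRing R_NormedModule).
  - apply tends_to_0_Cmod. intros eps Heps.
    set (e := eps / (1 + Cmod b)).
    assert (He : eps = e * (1 + Cmod b)) by (unfold e; field; lra).
    destruct (proj1 (tends_to_0_Cmod x) Hlim e) as [N HN]; [unfold e; apply Rdiv_lt_0_compat; lra|].
    exists N. intros k Hk. eapply Rle_lt_trans; [apply Cmod_shift_sub_le|].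
    pose proof (HN (S k) ltac:(lia)). pose proof (HN k Hk). nra.
Qed.

Lemma sup_norm_shift_sub_ge (b : C) (x : seqC) :
  in_hahn x -> Cmod b * sup_norm x <= sup_norm x + sup_norm (shift_sub b x).
Proof.
  intros Hx. destruct (hahn_bounded x Hx) as [B HB].
  assert (HBy : forall k, Cmod (shift_sub b x k) <= B + Cmod b * B).
  { intros k. eapply Rle_trans; [apply Cmod_shift_sub_le|].
    pose proof (HB (S k)). pose proof (HB k). pose proof (Cmod_ge_0 b). nra. }
  pose proof (sup_norm_ge0 x). pose proof (sup_norm_ge0 (shift_sub b x)).
  destruct (Cmod_ge_0 b) as [Hb|Hb]; [|rewrite <- Hb; lra].
  set (s := sup_norm x + sup_norm (shift_sub b x)).
  assert (Hle : sup_norm x <= s / Cmod b).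
  { apply (sup_norm_le x). intros k.
    apply Rmult_le_reg_l with (Cmod b); [exact Hb|].
    replace (Cmod b * (s / Cmod b)) with s by (field; lra).
    eapply Rle_trans; [apply Cmod_scal_le_shift_sub|].
    pose proof (Cmod_le_sup_norm x B HB (S k)).
    pose proof (Cmod_le_sup_norm (shift_sub b x) _ HBy k). unfold s. lra. }
  apply Rmult_le_compat_l with (r := Cmod b) in Hle; [|lra].
  replace (Cmod b * (s / Cmod b)) with s in Hle by (field; lra). exact Hle.
Qed.

Lemma Series_hahn_var_shift_sub_ge (b : C) (x : seqC) : in_hahn x ->
  Cmod b * Series (hahn_var x) <= Series (hahn_var x) + Series (hahn_var (shift_sub b x)).
Proof.
  intros Hx. pose proof (proj1 Hx) as Hvar. pose proof (proj1 (shift_sub_in_hahn b x Hx)) as Hvary.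
  apply ex_series_incr_1 in Hvar.
  rewrite <- Series_scal_l, (Series_incr_1_aux (hahn_var x)) by (unfold hahn_var; simpl; ring).
  rewrite <- Series_plus by assumption.
  apply Series_le.
  - intros k. split.
    + apply Rmult_le_pos; [apply Cmod_ge_0 | apply hahn_var_ge0].
    + apply scal_hahn_var_le_shift_sub.
  - now apply (@ex_series_plus R_AbsRing R_NormedModule).
Qed.

Lemma shift_sub_bounded_below (b : C) : 1 < Cmod b ->
  exists M, forall x, in_hahn x -> hahn_norm x <= M * hahn_norm (shift_sub b x).
Proof.
  intros Hb. exists (/ (Cmod b - 1)). intros x Hx.
  assert (H : (Cmod b - 1) * hahn_norm x <= hahn_norm (shift_sub b x)).
  { rewrite !hahn_norm_split.
    pose proof (sup_norm_shift_sub_ge b x Hx). pose proof (Series_hahn_var_shift_sub_ge b x Hx).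
    lra. }
  apply Rmult_le_reg_l with (Cmod b - 1); [lra|].
  rewrite <- Rmult_assoc, Rinv_r, Rmult_1_l by lra. exact H.
Qed.

Definition trunc (n : nat) (y : seqC) : seqC := fun k => if (k <? n)%nat then y k else RtoC 0.

Lemma trunc_vanishes_from (n : nat) (y : seqC) : vanishes_from (trunc n y) n.
Proof. intros k Hk. unfold trunc. destruct (Nat.ltb_spec k n); [lia | reflexivity]. Qed.

(* Solve [x (S k) - b x k = y k] backwards from the end of the support. *)
Lemma shift_sub_finite_preimage (b : C) : b <> RtoC 0 ->
  forall n y, vanishes_from y n -> exists x, vanishes_from x n /\ shift_sub b x = y.
Proof.
  intros Hb n. induction n as [|n IH]; intros y Hy.
  - exists (fun _ => RtoC 0). split; [now intros k _|].
    apply functional_extensionality. intros k. unfold shift_sub. rewrite Hy by lia. ring.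
  - destruct (IH (fun k => y (S k))) as [x [Hx Ex]]; [intros k Hk; apply Hy; lia|].
    exists (fun k => match k with O => Cdiv (Cminus (x 0%nat) (y 0%nat)) b | S j => x j end).
    split.
    + intros [|k] Hk; [lia|]. apply Hx. lia.
    + apply functional_extensionality. intros [|k]; unfold shift_sub.
      * field. exact Hb.
      * exact (f_equal (fun f => f k) Ex).
Qed.

Definition tail_var (y : seqC) (n : nat) : R := Series (fun j => hahn_var y (n + j)).

Lemma tail_var_ge0 (y : seqC) (n : nat) : 0 <= tail_var y n.
Proof. apply Series_ge0. intros j. apply hahn_var_ge0. Qed.

Section TailVariation.
Variable y : seqC.
Hypothesis Hy : in_hahn y.

Lemma ex_series_tail_var (n : nat) : ex_series (fun j => hahn_var y (n + j)).
Proof. apply ex_series_incr_n, Hy. Qed.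

Lemma tail_var_S (n : nat) : tail_var y n = hahn_var y n + tail_var y (S n).
Proof.
  unfold tail_var. rewrite Series_incr_1 by apply ex_series_tail_var.
  rewrite Nat.add_0_r. f_equal. apply Series_ext. intros j. f_equal. lia.
Qed.

Lemma tail_var_antitone (n d : nat) : tail_var y (n + d) <= tail_var y n.
Proof.
  induction d as [|d IH]; [rewrite Nat.add_0_r; lra|].
  rewrite Nat.add_succ_r. pose proof (tail_var_S (n + d)). pose proof (hahn_var_ge0 y (n + d)).
  lra.
Qed.

Lemma INR_mul_Cmod_le_tail_var (n : nat) : INR n * Cmod (y n) <= tail_var y n.
Proof.
  assert (Hstep : forall j,
    INR n * Cmod (y (n + j)%nat) <= hahn_var y (n + j) + INR n * Cmod (y (n + S j)%nat)).
  { intros j. rewrite hahn_var_fwd_diff, Nat.add_succ_r.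
    replace (y (n + j)%nat) with (Cplus (fwd_diff y (n + j)%nat) (y (S (n + j))))
      by (unfold fwd_diff; ring).
    pose proof (Cmod_triangle (fwd_diff y (n + j)%nat) (y (S (n + j)))).
    pose proof (le_INR n (n + j) ltac:(lia)). pose proof (pos_INR n).
    pose proof (Cmod_ge_0 (fwd_diff y (n + j)%nat)). nra. }
  assert (Htel : forall d,
    INR n * Cmod (y n)
    <= sum_f_R0 (fun j => hahn_var y (n + j)) d + INR n * Cmod (y (n + S d)%nat)).
  { induction d as [|d IH].
    - simpl. specialize (Hstep 0%nat). rewrite Nat.add_0_r in *. exact Hstep.
    - simpl. specialize (Hstep (S d)). lra. }
  apply le_epsilon. intros eps Heps.
  pose proof (pos_INR n).
  destruct (proj1 (tends_to_0_Cmod y) (proj2 Hy) (eps / (INR n + 1))) as [N HN].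
  { apply Rdiv_lt_0_compat; lra. }
  specialize (HN (n + S N)%nat ltac:(lia)). specialize (Htel N).
  pose proof (sum_f_R0_le_Series _ N (ex_series_tail_var n) (fun j => hahn_var_ge0 y _)).
  fold (tail_var y n) in H0.
  assert (INR n * Cmod (y (n + S N)%nat) <= eps).
  { apply Rmult_lt_compat_l with (r := INR n + 1) in HN; [|lra].
    replace ((INR n + 1) * (eps / (INR n + 1))) with eps in HN by (field; lra).
    pose proof (Cmod_ge_0 (y (n + S N)%nat)). nra. }
  lra.
Qed.

Lemma tail_var_small (eps : R) : 0 < eps -> exists n, tail_var y (S n) < eps.
Proof.
  intros Heps.
  pose proof (Series_correct _ (proj1 Hy)) as Hser. apply is_series_Reals in Hser.
  destruct (Hser eps Heps) as [N HN]. exists N. specialize (HN N (le_n N)).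
  rewrite (Series_incr_n (hahn_var y) (S N)) in HN by (lia || apply Hy).
  change (Init.Nat.pred (S N)) with N in HN. fold (tail_var y (S N)) in HN.
  pose proof (tail_var_ge0 y (S N)). unfold R_dist in HN.
  rewrite Rabs_minus_sym, Rabs_pos_eq in HN; lra.
Qed.

Lemma hahn_norm_trunc_sub (n : nat) :
  hahn_norm (fun k => Cminus (trunc (S n) y k) (y k)) <= 3 * tail_var y (S n).
Proof.
  set (r := fun k => Cminus (trunc (S n) y k) (y k)).
  assert (Hr : forall k, r k = if (k <=? n)%nat then RtoC 0 else Copp (y k)).
  { intros k. unfold r, trunc.
    destruct (Nat.ltb_spec k (S n)), (Nat.leb_spec k n); try lia; ring. }
  assert (Hvar_low : forall k, (k < n)%nat -> hahn_var r k = 0).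
  { intros k Hk. apply hahn_var_eq_0. rewrite !Hr.
    destruct (Nat.leb_spec k n), (Nat.leb_spec (S k) n); try lia; reflexivity. }
  assert (Hvar_n : hahn_var r n = INR n * Cmod (y (S n))).
  { unfold hahn_var. rewrite !Hr.
    destruct (Nat.leb_spec n n), (Nat.leb_spec (S n) n); try lia.
    replace (Cminus (RtoC 0) (Copp (y (S n)))) with (y (S n)) by ring. reflexivity. }
  assert (Hvar_high : forall j, hahn_var r (n + S j) = hahn_var y (S n + j)).
  { intros j. rewrite !hahn_var_fwd_diff. replace (n + S j)%nat with (S n + j)%nat by lia.
    f_equal. unfold fwd_diff. rewrite !Hr.
    destruct (Nat.leb_spec (S n + j) n), (Nat.leb_spec (S (S n + j)) n); try lia.
    rewrite <- Cmod_opp. f_equal. ring. }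
  assert (Hseries : Series (hahn_var r) = INR n * Cmod (y (S n)) + tail_var y (S n)).
  { rewrite (Series_incr_n_aux _ n Hvar_low), Series_incr_1.
    - rewrite Nat.add_0_r, Hvar_n. f_equal. apply Series_ext. apply Hvar_high.
    - apply ex_series_incr_1. eapply ex_series_ext; [|apply (ex_series_tail_var (S n))].
      intros j. symmetry. apply Hvar_high. }
  assert (Hsup : forall k, Cmod (r k) <= tail_var y (S n)).
  { intros k. rewrite Hr. destruct (Nat.leb_spec k n).
    - rewrite Cmod_0. apply tail_var_ge0.
    - rewrite Cmod_opp. pose proof (INR_mul_Cmod_le_tail_var k).
      pose proof (tail_var_antitone (S n) (k - S n)).
      replace (S n + (k - S n))%nat with k in * by lia.
      assert (1 <= INR k) by (apply (le_INR 1); lia).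
      pose proof (Cmod_ge_0 (y k)). nra. }
  rewrite hahn_norm_split, Hseries. pose proof (sup_norm_le r _ Hsup).
  pose proof (INR_mul_Cmod_le_tail_var (S n)). rewrite S_INR in *.
  pose proof (Cmod_ge_0 (y (S n))). lra.
Qed.

End TailVariation.

Lemma shift_sub_dense_range (b : C) : b <> RtoC 0 -> forall y, in_hahn y -> forall eps, 0 < eps ->
  exists x, in_hahn x /\ hahn_norm (fun k => Cminus (shift_sub b x k) (y k)) < eps.
Proof.
  intros Hb y Hy eps Heps.
  destruct (tail_var_small y Hy (eps / 3)) as [n Hn]; [lra|].
  destruct (shift_sub_finite_preimage b Hb (S n) (trunc (S n) y) (trunc_vanishes_from _ _))
    as [x [Hx Ex]].
  exists x. split; [exact (vanishes_from_in_hahn x _ Hx)|].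
  rewrite Ex. pose proof (hahn_norm_trunc_sub y Hy n). lra.
Qed.

Lemma sum_f_R0_INR (m : nat) : sum_f_R0 INR m = INR m * (INR m + 1) / 2.
Proof. induction m as [|m IH]; [simpl; field|]. rewrite tech5, IH, S_INR. field. Qed.

Lemma hahn_norm_indicator_le (m : nat) : hahn_norm (trunc (S m) (fun _ => RtoC 1)) <= INR m + 1.
Proof.
  set (u := trunc (S m) (fun _ => RtoC 1)).
  assert (Hvar : forall k, k <> m -> hahn_var u k = 0).
  { intros k Hk. apply hahn_var_eq_0. unfold u, trunc.
    destruct (Nat.ltb_spec k (S m)), (Nat.ltb_spec (S k) (S m)); try lia; reflexivity. }
  assert (Hvar_m : hahn_var u m = INR m).
  { unfold hahn_var, u, trunc.
    destruct (Nat.ltb_spec m (S m)), (Nat.ltb_spec (S m) (S m)); try lia.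
    replace (Cminus (RtoC 1) (RtoC 0)) with (RtoC 1) by ring. rewrite Cmod_1. ring. }
  assert (Hseries : Series (hahn_var u) = INR m).
  { rewrite (Series_incr_n_aux _ m) by (intros k Hk; apply Hvar; lia).
    destruct (Series_eventually_0 (fun j => hahn_var u (m + j)) 1) as [_ ->];
      [intros k Hk; apply Hvar; lia|].
    simpl.
    rewrite Nat.add_0_r, Hvar_m, Hvar by lia. ring. }
  assert (Hsup : sup_norm u <= 1).
  { apply sup_norm_le. intros k. unfold u, trunc. destruct (k <? S m)%nat.
    - rewrite Cmod_1. lra.
    - rewrite Cmod_0. lra. }
  rewrite hahn_norm_split, Hseries. lra.
Qed.

Lemma shift_sub_preimage_indicator (b : C) (m : nat) : Cmod b = 1 ->
  exists x, in_hahn x /\ (forall k, (k <= m)%nat -> hahn_var x k = INR k) /\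
            shift_sub b x = trunc (S m) (fun _ => RtoC 1).
Proof.
  intros Hb.
  assert (Hb0 : b <> RtoC 0) by (intros E; rewrite E, Cmod_0 in Hb; lra).
  destruct (shift_sub_finite_preimage b Hb0 (S m) _ (trunc_vanishes_from (S m) (fun _ => RtoC 1)))
    as [x [Hx Ex]].
  exists x. split; [exact (vanishes_from_in_hahn x _ Hx)|]. split; [|exact Ex].
  set (d := fwd_diff x).
  assert (Hd_m : Cmod (d m) = 1).
  { assert (Em : Cminus (x (S m)) (Cmult b (x m)) = RtoC 1).
    { change (shift_sub b x m = RtoC 1). rewrite Ex. unfold trunc.
      destruct (Nat.ltb_spec m (S m)); [reflexivity | lia]. }
    rewrite (Hx (S m)) in Em by lia.
    assert (Hbx : Cmod (Cmult b (x m)) = 1).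
    { replace (Cmult b (x m)) with (Copp (RtoC 1)) by (rewrite <- Em; ring).
      now rewrite Cmod_opp, Cmod_1. }
    rewrite Cmod_mult, Hb, Rmult_1_l in Hbx.
    unfold d, fwd_diff. rewrite (Hx (S m)) by lia.
    replace (Cminus (x m) (RtoC 0)) with (x m) by ring. exact Hbx. }
  (* Below [m] the right-hand side is constant, so [d] is a geometric sequence of ratio [b]. *)
  assert (Hd_rec : forall k, (k < m)%nat -> Cmod (d (S k)) = Cmod (d k)).
  { intros k Hk. pose proof (f_equal (fun f => f k) (fwd_diff_shift_sub b x)) as E.
    rewrite Ex in E. unfold fwd_diff at 1, trunc in E.
    destruct (Nat.ltb_spec k (S m)), (Nat.ltb_spec (S k) (S m)); try lia.
    unfold shift_sub in E. fold d in E.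
    replace (d (S k)) with (Cmult b (d k))
      by (transitivity (Cplus (Cminus (d (S k)) (Cmult b (d k))) (Cmult b (d k))); [|ring];
          rewrite <- E; ring).
    rewrite Cmod_mult, Hb. ring. }
  assert (Hd : forall j, (j <= m)%nat -> Cmod (d (m - j)%nat) = 1).
  { induction j as [|j IH]; intros Hj.
    - now rewrite Nat.sub_0_r.
    - rewrite <- (Hd_rec (m - S j)%nat) by lia. replace (S (m - S j)) with (m - j)%nat by lia.
      apply IH. lia. }
  intros k Hk. rewrite hahn_var_fwd_diff. fold d.
  replace k with (m - (m - k))%nat by lia. rewrite Hd by lia. ring.
Qed.

Lemma shift_sub_not_bounded_below (b : C) : Cmod b = 1 ->
  ~ exists M, forall x, in_hahn x -> hahn_norm x <= M * hahn_norm (shift_sub b x).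
Proof.
  intros Hb [M HM].
  destruct (INR_unbounded (2 * Rabs M)) as [m Hm].
  destruct (shift_sub_preimage_indicator b m Hb) as [x [Hx [Hvar Ex]]].
  specialize (HM x Hx). rewrite Ex in HM.
  pose proof (sum_hahn_var_le_hahn_norm x m Hx) as Hlow.
  rewrite (sum_eq _ INR) in Hlow by exact Hvar. rewrite sum_f_R0_INR in Hlow.
  pose proof (hahn_norm_indicator_le m) as Hup.
  set (u := trunc (S m) (fun _ => RtoC 1)) in *.
  assert (HMu : M * hahn_norm u <= Rabs M * (INR m + 1)).
  { apply Rle_trans with (Rabs M * hahn_norm u).
    - apply Rmult_le_compat_r; [apply hahn_norm_ge0 | apply Rle_abs].
    - apply Rmult_le_compat_l; [apply Rabs_pos | exact Hup]. }
  pose proof (Rabs_pos M). pose proof (pos_INR m).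
  nra.
Qed.

Theorem theorem4p6 (alpha : C) :
  cont_spectrum in_hahn hahn_norm fwd_diff alpha <->
  Cmod (Cminus (RtoC 1) alpha) = 1%R.
Proof.
  unfold cont_spectrum. cbv zeta. rewrite shift_op_fwd_diff.
  set (b := Cminus (RtoC 1) alpha).
  split.
  - intros [Hinj [_ Hunbounded]].
    destruct (Rtotal_order (Cmod b) 1) as [Hlt | [Heq | Hgt]].
    + exfalso. exact (shift_sub_not_injective b Hlt Hinj).
    + exact Heq.
    + exfalso. exact (Hunbounded (shift_sub_bounded_below b Hgt)).
  - intros Hb. split; [|split].
    + apply shift_sub_injective. lra.
    + apply shift_sub_dense_range. intros E. rewrite E, Cmod_0 in Hb. lra.
    + exact (shift_sub_not_bounded_below b Hb).
Qed.
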